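(* Let $\mathscr{H}$ be a complex Hilbert space and let $B,C$ be Hilbert–Schmidt operators on $\mathscr{H}$. Then $$w_{(2,e)}^2(B,C)\geq\frac14\,|\mathrm{tr}(B^2)+\mathrm{tr}(C^2)+2\,\mathrm{tr}(BC)|+\frac14\left(\|B\|_2^2+\|C\|_2^2+2\,\mathrm{Re}(\mathrm{tr}(BC^* ))\right),$$ where $\mathrm{Re}(z)$ denotes the real part of $z\in\mathbb{C}$.
   Context: An operator $T$ on $\mathscr{H}$ is Hilbert–Schmidt if $\sum_i\|Te_i\|^2<\infty$ for some (equivalently every) orthonormal basis $\{e_i\}$; its Hilbert–Schmidt norm is $\|T\|_2=(\sum_i\|Te_i\|^2)^{1/2}=(\mathrm{tr}(T^*T))^{1/2}$. For an operator $T$, $\Re(T)=\frac12(T+T^* )$. The Hilbert–Schmidt Euclidean operator radius is $w_{(2,e)}(B,C)=\sup_{\lambda_1,\lambda_2\in\mathbb{C},\ |\lambda_1|^2+|\lambda_2|^2\leq1}\sup_{\theta\in\mathbb{R}}\|\Re(e^{i\theta}(\lambda_1B+\lambda_2C))\|_2$. *)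

From HB Require Import structures.
From mathcomp Require Import all_boot all_order all_algebra.
From mathcomp Require Import boolp classical_sets reals ereal esum trigo.
From mathcomp Require Import complex.
Set Implicit Arguments. Unset Strict Implicit. Unset Printing Implicit Defensive.
Import Order.TTheory GRing.Theory Num.Theory.
Local Open Scope ring_scope.
Local Open Scope classical_set_scope.

Section HilbertSchmidt.
Variable R : realType.
Local Notation C := R[i].
Variable V : lmodType C.
Variable ip : V -> V -> C.

Definition inner_product_axioms : Prop :=
  [/\ (forall (a : C) (x y z : V), ip (a *: x + y) z = a * ip x z + ip y z),
      (forall x y, ip y x = conjc (ip x y)),
      (forall x, 0 <= ip x x) &
      (forall x, ip x x = 0 -> x = 0)].

Definition vnorm (x : V) : R := Num.sqrt (complex.Re (ip x x)).

Definition cauchy_seq (u : nat -> V) : Prop :=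
  forall eps : R, 0 < eps -> exists N : nat, forall m n : nat,
    (N <= m)%N -> (N <= n)%N -> vnorm (u m - u n) < eps.

Definition converges_to (u : nat -> V) (l : V) : Prop :=
  forall eps : R, 0 < eps -> exists N : nat, forall n : nat,
    (N <= n)%N -> vnorm (u n - l) < eps.

Definition complete_space : Prop :=
  forall u, cauchy_seq u -> exists l, converges_to u l.

Definition hilbert_space : Prop := inner_product_axioms /\ complete_space.

Definition bounded_linear (T : V -> V) : Prop :=
  (forall (a : C) (x y : V), T (a *: x + y) = a *: T x + T y) /\
  exists M : R, forall x, vnorm (T x) <= M * vnorm x.

Definition is_adjoint (T S : V -> V) : Prop :=
  forall x y, ip (T x) y = ip x (S y).

Variable I : choiceType.
Variable e : I -> V.

Definition orthonormal_basis : Prop :=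
  [/\ (forall i, ip (e i) (e i) = 1),
      (forall i j, i <> j -> ip (e i) (e j) = 0) &
      (forall x, (forall i, ip x (e i) = 0) -> x = 0)].

Definition hs_sum (T : V -> V) : \bar R :=
  (\esum_(i in [set: I]) ((vnorm (T (e i))) ^+ 2)%:E)%E.

Definition hilbert_schmidt (T : V -> V) : Prop :=
  bounded_linear T /\ (hs_sum T < +oo)%E.

Definition hs_norm (T : V -> V) : R := Num.sqrt (fine (hs_sum T)).

(* unordered sum of a (absolutely summable) complex family *)
Definition rsum (f : I -> R) : R :=
  fine (\esum_(i in [set: I]) (Num.max (f i) 0)%:E)%E -
  fine (\esum_(i in [set: I]) (Num.max (- f i) 0)%:E)%E.

Definition csum (f : I -> C) : C :=
  (rsum (fun i => complex.Re (f i)) +i* rsum (fun i => complex.Im (f i)))%C.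

Definition trace (T : V -> V) : C := csum (fun i => ip (T (e i)) (e i)).

(* Re(T) = (T + T^* )/2, for T with adjoint S *)
Definition re_op (T S : V -> V) : V -> V := fun x => 2^-1 *: (T x + S x).

Definition expi (t : R) : C := (cos t +i* sin t)%C.

(* w_(2,e)(B,C), where Bs, Cs are the adjoints of B, C:
   sup over |l1|^2+|l2|^2 <= 1 and real t of
   || Re(e^{it}(l1 B + l2 C)) ||_2 ,
   with (e^{it}(l1 B + l2 C))^* = conj(e^{it}) (conj l1 B^* + conj l2 C^* ). *)
Definition w2e (B Bs Cc Cs : V -> V) : R :=
  sup [set r : R | exists (l1 l2 : C) (t : R),
        ComplexField.Normc.normc l1 ^+ 2 + ComplexField.Normc.normc l2 ^+ 2 <= 1 /\
        r = hs_norm (re_op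
              (fun x => expi t *: (l1 *: B x + l2 *: Cc x))
              (fun x => conjc (expi t) *: (conjc l1 *: Bs x + conjc l2 *: Cs x)))].

End HilbertSchmidt.

(* For a Hilbert-Schmidt operator X with adjoint X^*, expanding the Hilbert-Schmidt
   norm gives ||Re X||_2^2 = (||X||_2^2 + Re tr(X^2)) / 2.  For X = w (B + C) with
   |w|^2 = 1/2 (that is l1 = l2 = w and theta = 0) this is
   (||B||_2^2 + ||C||_2^2 + 2 Re tr(B C^* )) / 4 + Re (w^2 tr((B + C)^2)) / 2,
   and choosing the phase of w so that w^2 tr((B + C)^2) = |tr((B + C)^2)| / 2 turns it
   into the right-hand side, which w_(2,e)^2 dominates.  The expansion uses
   ||X^*||_2 = ||X||_2 and tr(CB) = tr(BC); both follow from Parseval's identity, which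
   is where the completeness of the space is needed. *)

From HB Require Import structures.
From mathcomp Require Import all_boot all_order all_algebra.
From mathcomp Require Import boolp classical_sets reals ereal esum trigo.
From mathcomp Require Import complex.
From mathcomp Require Import ring lra.
From mathcomp Require Import functions cardinality fsbigop.
Import Order.TTheory GRing.Theory Num.Theory.
Local Open Scope ring_scope.
Set Implicit Arguments. Unset Strict Implicit. Unset Printing Implicit Defensive.

Section ComplexComponents.
Variable R : rcfType.
Implicit Types a b : R[i].
Local Notation Re := complex.Re.
Local Notation Im := complex.Im.

Lemma Re_add a b : Re (a + b) = Re a + Re b. Proof. by case: a b => ? ? []. Qed.
Lemma Im_add a b : Im (a + b) = Im a + Im b. Proof. by case: a b => ? ? []. Qed.
Lemma Re_mul a b : Re (a * b) = Re a * Re b - Im a * Im b.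
Proof. by case: a b => ? ? []. Qed.
Lemma Im_mul a b : Im (a * b) = Re a * Im b + Im a * Re b.
Proof. by case: a b => ? ? []. Qed.
Lemma Re_conjc a : Re (conjc a) = Re a. Proof. by case: a. Qed.
Lemma Im_conjc a : Im (conjc a) = - Im a. Proof. by case: a. Qed.

Lemma complex_eq a b : Re a = Re b -> Im a = Im b -> a = b.
Proof. by case: a b => ? ? [? ?] /= -> ->. Qed.

Lemma Re_sum (J : Type) (s : seq J) (F : J -> R[i]) :
  Re (\sum_(j <- s) F j) = \sum_(j <- s) Re (F j).
Proof. exact: (big_morph _ Re_add). Qed.

Definition normc2 a : R := Re a ^+ 2 + Im a ^+ 2.

Lemma normc2_ge0 a : 0 <= normc2 a.
Proof. by rewrite addr_ge0 ?sqr_ge0. Qed.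

Lemma Re_mul_conjc a : Re (a * conjc a) = normc2 a.
Proof. by rewrite Re_mul Re_conjc Im_conjc /normc2; ring. Qed.

Lemma normc2M a b : normc2 (a * b) = normc2 a * normc2 b.
Proof. by rewrite /normc2 Re_mul Im_mul; ring. Qed.

Lemma normc2_conjc a : normc2 (conjc a) = normc2 a.
Proof. by rewrite /normc2 Re_conjc Im_conjc sqrrN. Qed.

Lemma normc2_real (r : R) : normc2 r%:C%C = r ^+ 2.
Proof. by rewrite /normc2 /= expr0n addr0. Qed.

Lemma normc2D_le a b : normc2 (a + b) <= 2 * normc2 a + 2 * normc2 b.
Proof.
rewrite /normc2 Re_add Im_add.
have := sqr_ge0 (Re a - Re b); have := sqr_ge0 (Im a - Im b).
rewrite !sqrrB !sqrrD; lra.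
Qed.

Lemma normc2_eq0 a : normc2 a = 0 -> a = 0.
Proof.
move=> /eqP; rewrite paddr_eq0 ?sqr_ge0 // !sqrf_eq0 => /andP[/eqP h1 /eqP h2].
by apply: complex_eq; rewrite /= ?h1 ?h2.
Qed.

Lemma sqr_normcE a : ComplexField.Normc.normc a ^+ 2 = normc2 a.
Proof. by case: a => x y; rewrite /= sqr_sqrtr // addr_ge0 ?sqr_ge0. Qed.

Lemma normc2_half : normc2 (2^-1 : R[i]) = 4^-1.
Proof.
have -> : (2^-1 : R[i]) = (2^-1 : R)%:C%C by rewrite fmorphV rmorph_nat.
by rewrite normc2_real; field.
Qed.

Lemma Im_Re_conji a : Im a = Re (conjc 'i%C * a).
Proof. by case: a => x y /=; ring. Qed.

Lemma exists_half_phase (Z : R[i]) : exists w : R[i],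
  normc2 w = 2^-1 /\ Re (w * w * Z) = ComplexField.Normc.normc Z / 2.
Proof.
have [u [u_quarter uZ]] : exists u : R[i],
    normc2 u = 4^-1 /\ Re (u * Z) = ComplexField.Normc.normc Z / 2.
  have [->|Z_neq0] := eqVneq Z 0.
    by exists 2^-1; rewrite normc2_half mulr0 ComplexField.Normc.normc0 mul0r.
  set N := ComplexField.Normc.normc Z.
  have N_neq0 : N != 0.
    by apply: contra Z_neq0 => /eqP /ComplexField.Normc.eq0_normc ->.
  have := sqr_normcE Z; rewrite -/N /normc2 => N2.
  (* u = conj Z / (2 |Z|) *)
  exists (Re Z / (2 * N) -i* (Im Z / (2 * N)))%C; rewrite /normc2 /=.
  split; first by rewrite sqrrN !expr_div_n -mulrDl -N2; field.
  have -> : N / 2 = N ^+ 2 / (2 * N) by field.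
  by rewrite Re_mul /= N2; field.
exists (sqrtc u); rewrite -expr2 sqr_sqrtc; split => //.
have := normc2M (sqrtc u) (sqrtc u); rewrite -expr2 sqr_sqrtc u_quarter.
by have := normc2_ge0 (sqrtc u); nra.
Qed.

End ComplexComponents.

Section InnerProduct.
Variable R : realType.
Local Notation C := R[i].
Local Notation Re := complex.Re.
Local Notation Im := complex.Im.
Variables (V : lmodType C) (ip : V -> V -> C).
Hypothesis ipax : inner_product_axioms ip.
Implicit Types x y z : V.

Lemma ip_linear a x y z : ip (a *: x + y) z = a * ip x z + ip y z.
Proof. by case: ipax. Qed.
Lemma ip_conj x y : ip y x = conjc (ip x y).
Proof. by case: ipax. Qed.
Lemma ipxx_ge0 x : 0 <= ip x x.
Proof. by case: ipax. Qed.
Lemma ipxx_eq0 x : ip x x = 0 -> x = 0.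
Proof. by case: ipax => _ _ _; apply. Qed.

Lemma ip0l z : ip 0 z = 0.
Proof.
have := ip_linear 1 0 0 z; rewrite scaler0 addr0 mul1r.
by rewrite -{1}[ip 0 z]addr0 => /addrI.
Qed.
Lemma ipDl x y z : ip (x + y) z = ip x z + ip y z.
Proof. by rewrite -[x]scale1r ip_linear mul1r scale1r. Qed.
Lemma ipZl a x z : ip (a *: x) z = a * ip x z.
Proof. by rewrite -[a *: x]addr0 ip_linear ip0l addr0. Qed.
Lemma ipNl x z : ip (- x) z = - ip x z.
Proof. by rewrite -scaleN1r ipZl mulN1r. Qed.
Lemma ipBl x y z : ip (x - y) z = ip x z - ip y z.
Proof. by rewrite ipDl ipNl. Qed.
Lemma ip0r z : ip z 0 = 0.
Proof. by rewrite ip_conj ip0l rmorph0. Qed.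
Lemma ipDr x y z : ip z (x + y) = ip z x + ip z y.
Proof. by rewrite ip_conj ipDl rmorphD /= -!ip_conj. Qed.
Lemma ipZr a x z : ip z (a *: x) = conjc a * ip z x.
Proof. by rewrite ip_conj ipZl rmorphM /= -ip_conj. Qed.
Lemma ipNr x z : ip z (- x) = - ip z x.
Proof. by rewrite -scaleN1r ipZr rmorphN1 mulN1r. Qed.
Lemma ipBr x y z : ip z (x - y) = ip z x - ip z y.
Proof. by rewrite ipDr ipNr. Qed.

Lemma ip_suml (J : Type) (s : seq J) (f : J -> V) z :
  ip (\sum_(j <- s) f j) z = \sum_(j <- s) ip (f j) z.
Proof. exact: (big_morph (ip^~ z) (fun x y => ipDl x y z) (ip0l z)). Qed.
Lemma ip_sumr (J : Type) (s : seq J) (f : J -> V) z :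
  ip z (\sum_(j <- s) f j) = \sum_(j <- s) ip z (f j).
Proof. exact: (big_morph (ip z) (fun x y => ipDr x y z) (ip0r z)). Qed.

Definition sqn x : R := Re (ip x x).

Lemma sqn_ge0 x : 0 <= sqn x.
Proof. by have := ipxx_ge0 x; rewrite lecE => /andP[]. Qed.

Lemma ipxx x : ip x x = (sqn x)%:C%C.
Proof. by apply: complex_eq => //=; apply/ger0_Im/ipxx_ge0. Qed.

Lemma sqn_eq0 x : sqn x = 0 -> x = 0.
Proof. by move=> h; apply: ipxx_eq0; rewrite ipxx h. Qed.

Lemma vnorm_sqn x : vnorm ip x = Num.sqrt (sqn x).
Proof. by []. Qed.

Lemma cauchy_seq_sqn u :
  (forall eps, 0 < eps -> exists N, forall m n, (N <= m)%N -> (N <= n)%N ->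
     sqn (u m - u n) < eps) ->
  cauchy_seq ip u.
Proof.
move=> u_cauchy eps eps_gt0; have [N hN] := u_cauchy _ (exprn_gt0 2 eps_gt0).
exists N => m n hm hn; rewrite vnorm_sqn -[eps]ger0_norm ?ltW // -sqrtr_sqr.
by rewrite ltr_sqrt ?exprn_gt0 // hN.
Qed.

Lemma converges_to_sqn u l : converges_to ip u l ->
  forall eps, 0 < eps -> exists N, forall n, (N <= n)%N -> sqn (u n - l) < eps.
Proof.
move=> ul eps eps_gt0; have sqrt_gt0 : 0 < Num.sqrt eps by rewrite sqrtr_gt0.
have [N hN] := ul _ sqrt_gt0.
by exists N => n /hN; rewrite vnorm_sqn ltr_sqrt.
Qed.

Lemma Re_ip_conj x y : Re (ip y x) = Re (ip x y).
Proof. by rewrite ip_conj Re_conjc. Qed.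

Lemma sqnD x y : sqn (x + y) = sqn x + sqn y + 2 * Re (ip x y).
Proof. by rewrite /sqn ipDl !ipDr !Re_add (Re_ip_conj x y); ring. Qed.
Lemma sqnN x : sqn (- x) = sqn x.
Proof. by rewrite /sqn ipNl ipNr opprK. Qed.
Lemma sqnB x y : sqn (x - y) = sqn x + sqn y - 2 * Re (ip x y).
Proof. by rewrite sqnD sqnN ipNr; case: (ip x y) => ? ? /=; ring. Qed.
Lemma sqnZ a x : sqn (a *: x) = normc2 a * sqn x.
Proof.
by rewrite /sqn ipZl ipZr mulrA ipxx Re_mul Re_mul_conjc /= mulr0 subr0.
Qed.

Lemma sqnD_le x y : sqn (x + y) <= 2 * sqn x + 2 * sqn y.
Proof. by have := sqn_ge0 (x - y); rewrite sqnB sqnD; lra. Qed.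

Lemma Re_ip_le x y : 2 * `|Re (ip x y)| <= sqn x + sqn y.
Proof.
have := sqn_ge0 (x + y); have := sqn_ge0 (x - y); rewrite sqnB sqnD.
by have [r0|r0] := leP 0 (Re (ip x y)); [rewrite ger0_norm|rewrite ltr0_norm]; lra.
Qed.

Lemma Im_ip_le x y : 2 * `|Im (ip x y)| <= sqn x + sqn y.
Proof.
have -> : Im (ip x y) = Re (ip x ('i%C *: y)) by rewrite ipZr Re_mul /=; ring.
by apply: le_trans (Re_ip_le _ _) _; rewrite sqnZ /normc2 /= expr0n expr1n add0r mul1r.
Qed.

Lemma normc2_ip_le x y : normc2 (ip x y) <= sqn x * sqn y.
Proof.
have [y0|y_neq0] := eqVneq (sqn y) 0.
  by rewrite y0 mulr0 (sqn_eq0 y0) ip0r /normc2 /= expr0n addr0.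
have y_gt0 : 0 < sqn y by rewrite lt_def y_neq0 sqn_ge0.
have cross : Re (ip ((sqn y)%:C%C *: x) (ip x y *: y)) = sqn y * normc2 (ip x y).
  by rewrite ipZl ipZr [_ * ip x y]mulrC Re_mul Re_mul_conjc /= mul0r subr0.
have := sqn_ge0 ((sqn y)%:C%C *: x - ip x y *: y).
rewrite sqnB !sqnZ normc2_real cross => h.
have : 0 <= sqn y * (sqn y * sqn x - normc2 (ip x y)) by move: h; congr (_ <= _); ring.
by rewrite pmulr_rge0 // subr_ge0 [sqn y * _]mulrC.
Qed.

Lemma sqn_re_op_le (al l1 l2 : C) (a b c d : V) :
  normc2 al = 1 -> normc2 l1 <= 1 -> normc2 l2 <= 1 ->
  sqn (2^-1 *: (al *: (l1 *: a + l2 *: b) + conjc al *: (conjc l1 *: c + conjc l2 *: d)))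
  <= sqn a + sqn b + sqn c + sqn d.
Proof.
move=> al1 l1_le1 l2_le1.
have term u v (m1 m2 : C) : normc2 m1 <= 1 -> normc2 m2 <= 1 ->
    sqn (m1 *: u + m2 *: v) <= 2 * sqn u + 2 * sqn v.
  move=> m1_le1 m2_le1; apply: le_trans (sqnD_le _ _) _; rewrite !sqnZ.
  have := ler_piMl (sqn_ge0 u) m1_le1; have := ler_piMl (sqn_ge0 v) m2_le1; lra.
rewrite sqnZ normc2_half.
have := sqnD_le (al *: (l1 *: a + l2 *: b)) (conjc al *: (conjc l1 *: c + conjc l2 *: d)).
rewrite !sqnZ normc2_conjc al1 !mul1r.
have := term a b _ _ l1_le1 l2_le1.
have := term c d (conjc l1) (conjc l2); rewrite !normc2_conjc => /(_ l1_le1 l2_le1).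
lra.
Qed.

End InnerProduct.

Section RealFamilies.
Variables (R : realType) (I : choiceType).
Implicit Types f g : I -> R.

Definition esumR f : \bar R := (\esum_(i in [set: I]) (f i)%:E)%E.
Definition sumR f : R := fine (esumR f).
Definition fin_esumR f : Prop := (esumR f < +oo)%E.
Definition summableR f : Prop := fin_esumR (fun i => `|f i|).

Lemma esumR_ge0 f : (forall i, 0 <= f i) -> (0 <= esumR f)%E.
Proof. by move=> f0; apply: esum_ge0 => i _; rewrite lee_fin. Qed.

Lemma esumRE f : (forall i, 0 <= f i) -> fin_esumR f -> esumR f = (sumR f)%:E.
Proof. by move=> f0 ffin; rewrite /sumR fineK // ge0_fin_numE // esumR_ge0. Qed.

Lemma sumR_ge0 f : (forall i, 0 <= f i) -> 0 <= sumR f.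
Proof. by move=> f0; rewrite fine_ge0 // esumR_ge0. Qed.

Lemma le_esumR f g : (forall i, f i <= g i) -> (esumR f <= esumR g)%E.
Proof. by move=> fg; apply: le_esum => i _; rewrite lee_fin. Qed.

Lemma fin_esumR_le f g : (forall i, f i <= g i) -> fin_esumR g -> fin_esumR f.
Proof. by move=> fg; apply: le_lt_trans; apply: le_esumR. Qed.

Lemma ler_sumR f g : (forall i, 0 <= f i) -> (forall i, f i <= g i) ->
  fin_esumR g -> sumR f <= sumR g.
Proof.
move=> f0 fg gfin; have g0 i := le_trans (f0 i) (fg i).
rewrite -lee_fin -!esumRE // ?le_esumR //; exact: fin_esumR_le gfin.
Qed.

Lemma esumR0 : esumR (fun _ => 0) = 0%E.
Proof. exact: esum1. Qed.

Lemma esumRD f g : (forall i, 0 <= f i) -> (forall i, 0 <= g i) ->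
  esumR (fun i => f i + g i) = (esumR f + esumR g)%E.
Proof.
by move=> f0 g0; rewrite /esumR -esumD => [|i _|i _]; rewrite ?lee_fin.
Qed.

Lemma fin_esumRD f g : (forall i, 0 <= f i) -> (forall i, 0 <= g i) ->
  fin_esumR f -> fin_esumR g -> fin_esumR (fun i => f i + g i).
Proof.
by move=> f0 g0 ffin gfin; rewrite /fin_esumR esumRD // !esumRE // -EFinD ltry.
Qed.

Lemma sumRD f g : (forall i, 0 <= f i) -> (forall i, 0 <= g i) ->
  fin_esumR f -> fin_esumR g -> sumR (fun i => f i + g i) = sumR f + sumR g.
Proof. by move=> f0 g0 ffin gfin; rewrite {1}/sumR esumRD // !esumRE. Qed.

Lemma esumRZ c f : 0 <= c -> (forall i, 0 <= f i) ->
  esumR (fun i => c * f i) = (c%:E * esumR f)%E.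
Proof.
move=> c0 f0; rewrite /esumR /esum -ereal_supZl //; last first.
  by apply/set0P; exists 0%E, set0; [exact: fsets_set0|rewrite fsbig_set0].
congr ereal_sup; apply/seteqP; split => x /=.
  move=> [A [finA _] <-]; exists (\sum_(i \in A) (f i)%:E)%E; first by exists A.
  by rewrite !fsumEFin // -EFinM !fsbig_finite //= mulr_sumr.
move=> [y [A [finA HA] <-] <-]; exists A => //.
by rewrite !fsumEFin // -EFinM !fsbig_finite //= mulr_sumr.
Qed.

Lemma fin_esumRZ c f : 0 <= c -> (forall i, 0 <= f i) ->
  fin_esumR f -> fin_esumR (fun i => c * f i).
Proof. by move=> c0 f0 ffin; rewrite /fin_esumR esumRZ // esumRE // -EFinM ltry. Qed.

Lemma sumRZ c f : 0 <= c -> (forall i, 0 <= f i) ->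
  fin_esumR f -> sumR (fun i => c * f i) = c * sumR f.
Proof. by move=> c0 f0 ffin; rewrite {1}/sumR esumRZ // esumRE. Qed.

Local Notation pos f := (fun i => Num.max (f i) 0).
Local Notation neg f := (fun i => Num.max (- f i) 0).

Lemma max0_ge0 (x : R) : 0 <= Num.max x 0.
Proof. by rewrite le_max lexx orbT. Qed.

Lemma max0_sub (x : R) : Num.max x 0 - Num.max (- x) 0 = x.
Proof.
have [x0|x0] := boolP (0 <= x).
  by rewrite max_l // max_r ?subr0 // oppr_le0.
by rewrite max_r ?max_l ?sub0r ?opprK // ?oppr_ge0 ltW // ltNge.
Qed.

Lemma rsumE f : rsum f = sumR (pos f) - sumR (neg f).
Proof. by []. Qed.

Lemma summableR_le f g : (forall i, `|f i| <= g i) -> fin_esumR g -> summableR f.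
Proof. exact: fin_esumR_le. Qed.

Lemma summableR_pos f : summableR f -> fin_esumR (pos f).
Proof. by apply: fin_esumR_le => i; rewrite ge_max normr_ge0 ler_norm. Qed.

Lemma summableR_neg f : summableR f -> fin_esumR (neg f).
Proof. by apply: fin_esumR_le => i; rewrite ge_max normr_ge0 -normrN ler_norm. Qed.

Lemma summableRZ c f : summableR f -> summableR (fun i => c * f i).
Proof.
move=> ffin; apply: summableR_le (fin_esumRZ (normr_ge0 c) _ ffin) => // i.
by rewrite normrM.
Qed.

Lemma eq_rsum f g : f =1 g -> rsum f = rsum g.
Proof. by move=> /funext ->. Qed.

Lemma rsumB f g : (forall i, 0 <= f i) -> (forall i, 0 <= g i) ->
  fin_esumR f -> fin_esumR g -> rsum (fun i => f i - g i) = sumR f - sumR g.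
Proof.
move=> f0 g0 ffin gfin.
pose p := pos (fun i => f i - g i); pose n := neg (fun i => f i - g i).
have pfin : fin_esumR p.
  by apply: fin_esumR_le ffin => i; rewrite /p ge_max f0 andbT; have := g0 i; lra.
have nfin : fin_esumR n.
  by apply: fin_esumR_le gfin => i; rewrite /n ge_max g0 andbT; have := f0 i; lra.
(* p - n = f - g, rearranged without subtraction so that sumRD applies *)
have pgnf : (fun i => p i + g i) = (fun i => n i + f i).
  by apply/funext => i; have := max0_sub (f i - g i); rewrite /p /n; lra.
have := sumRD (fun i => max0_ge0 _) g0 pfin gfin.
rewrite pgnf sumRD // => [|i]; last exact: max0_ge0.
rewrite /rsum -/(sumR p) -/(sumR n); lra.
Qed.

Lemma rsum_ge0 f : (forall i, 0 <= f i) -> fin_esumR f -> rsum f = sumR f.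
Proof.
move=> f0 ffin; have fin0 : fin_esumR (fun _ => 0) by rewrite /fin_esumR esumR0.
have := rsumB f0 (fun=> lexx 0) ffin fin0.
by rewrite /sumR esumR0 subr0 => <-; apply: eq_rsum => i; rewrite subr0.
Qed.

Lemma rsumD f g : summableR f -> summableR g ->
  rsum (fun i => f i + g i) = rsum f + rsum g.
Proof.
move=> ffin gfin.
rewrite (eq_rsum (g := fun i => (Num.max (f i) 0 + Num.max (g i) 0)
                               - (Num.max (- f i) 0 + Num.max (- g i) 0))); last first.
  by move=> i; rewrite opprD addrACA !max0_sub.
have [fp fn] := (summableR_pos ffin, summableR_neg ffin).
have [gp gn] := (summableR_pos gfin, summableR_neg gfin).
rewrite rsumB ?sumRD ?rsumE //; first ring.
all: try by move=> i; rewrite ?addr_ge0 ?max0_ge0.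
all: by apply: fin_esumRD => // i; rewrite max0_ge0.
Qed.

Lemma rsumN f : rsum (fun i => - f i) = - rsum f.
Proof.
by rewrite !rsumE opprB; congr (_ - sumR _); apply/funext => i; rewrite opprK.
Qed.

Lemma rsumZ c f : summableR f -> rsum (fun i => c * f i) = c * rsum f.
Proof.
move=> ffin; wlog c0 : c / 0 <= c => [hwlog|].
  have [/hwlog //|c_lt0] := leP 0 c.
  have := hwlog (- c); rewrite oppr_ge0 => /(_ (ltW c_lt0)).
  by under eq_rsum do rewrite mulNr; rewrite rsumN mulNr => /oppr_inj.
rewrite (eq_rsum (g := fun i => c * Num.max (f i) 0 - c * Num.max (- f i) 0)); last first.
  by move=> i; rewrite -mulrBr max0_sub.
have [fp fn] := (summableR_pos ffin, summableR_neg ffin).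
rewrite rsumB ?sumRZ ?rsumE ?mulrBr //.
all: try by move=> i; rewrite ?mulr_ge0 ?max0_ge0.
all: by apply: fin_esumRZ => // i; rewrite max0_ge0.
Qed.

End RealFamilies.

Section ComplexFamilies.
Variables (R : realType) (I : choiceType).
Local Notation Re := complex.Re.
Local Notation Im := complex.Im.
Implicit Types f g : I -> R[i].

Definition csummable f :=
  summableR (fun i => Re (f i)) /\ summableR (fun i => Im (f i)).

Lemma csumD f g : csummable f -> csummable g ->
  csum (fun i => f i + g i) = csum f + csum g.
Proof.
move=> [fRe fIm] [gRe gIm]; apply: complex_eq.
  by rewrite Re_add /= -rsumD //; apply: eq_rsum => i; rewrite Re_add.
by rewrite Im_add /= -rsumD //; apply: eq_rsum => i; rewrite Im_add.
Qed.

Lemma csumZ a f : csummable f -> csum (fun i => a * f i) = a * csum f.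
Proof.
move=> [fRe fIm]; apply: complex_eq.
  rewrite Re_mul /= -mulNr -!rsumZ // -rsumD; try exact: summableRZ.
  by apply: eq_rsum => i; rewrite Re_mul mulNr.
rewrite Im_mul /= -!rsumZ // -rsumD; try exact: summableRZ.
by apply: eq_rsum => i; rewrite Im_mul.
Qed.

Lemma csum_conj f : csum (fun i => conjc (f i)) = conjc (csum f).
Proof.
apply: complex_eq; first by rewrite Re_conjc /=; apply: eq_rsum => i; rewrite Re_conjc.
by rewrite Im_conjc /= -rsumN; apply: eq_rsum => i; rewrite Im_conjc.
Qed.

Lemma csum_real (a : I -> R) : (forall i, 0 <= a i) -> fin_esumR a ->
  csum (fun i => (a i)%:C%C) = (sumR a)%:C%C.
Proof.
move=> a0 afin; apply: complex_eq => /=; first exact: rsum_ge0.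
rewrite (@eq_rsum _ _ _ (fun _ => 0)) // rsum_ge0 //.
  by rewrite /sumR esumR0.
by rewrite /fin_esumR esumR0.
Qed.

End ComplexFamilies.

Lemma inv_nat_lt (R : archiRealFieldType) (r : R) : 0 < r ->
  exists N, forall n, (N <= n)%N -> n.+1%:R^-1 < r.
Proof.
move=> r_gt0; exists (Num.bound r^-1) => n le_Nn.
have r_inv_ge0 : 0 <= r^-1 by rewrite invr_ge0 ltW.
rewrite -[r in _ < r]invrK ltf_pV2 ?posrE ?invr_gt0 //.
by apply: (lt_le_trans (archi_boundP r_inv_ge0)); rewrite ler_nat leqW.
Qed.

Section Accumulation.
Variable T : eqType.
Implicit Type s : nat -> seq T.

Definition accum s n : seq T := undup (flatten (map s (iota 0 n.+1))).

Lemma accum_uniq s n : uniq (accum s n).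
Proof. exact: undup_uniq. Qed.

Lemma mem_accum s n x : (x \in accum s n) = has (fun k => x \in s k) (iota 0 n.+1).
Proof.
by rewrite mem_undup; apply/flatten_mapP/hasP => -[k kn xk]; exists k.
Qed.

Lemma accum_sub s n : {subset s n <= accum s n}.
Proof.
by move=> x xn; rewrite mem_accum; apply/hasP; exists n; rewrite // mem_iota add0n ltnS leqnn.
Qed.

Lemma accum_mono s n m : (n <= m)%N -> {subset accum s n <= accum s m}.
Proof.
move=> le_nm x; rewrite !mem_accum => /hasP[k].
rewrite !mem_iota !add0n => /andP[_ kn] xk.
by apply/hasP; exists k; rewrite // mem_iota add0n (leq_trans kn).
Qed.

End Accumulation.

Section Parseval.
Variable R : realType.
Variables (V : lmodType R[i]) (ip : V -> V -> R[i]).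
Hypotheses (ipax : inner_product_axioms ip) (hcomp : complete_space ip).
Variables (I : choiceType) (e : I -> V).
Hypothesis onb : orthonormal_basis ip e.
Local Notation sqn := (sqn ip).
Local Notation Re := complex.Re.
Implicit Types (x y z : V) (s t : seq I).

Lemma ip_ee k : ip (e k) (e k) = 1.
Proof. by case: onb. Qed.
Lemma ip_e_neq j k : j <> k -> ip (e j) (e k) = 0.
Proof. by case: onb => _ + _; apply. Qed.
Lemma orthonormal_total x : (forall k, ip x (e k) = 0) -> x = 0.
Proof. by case: onb => _ _; apply. Qed.

Lemma sqn_e k : sqn (e k) = 1.
Proof. by rewrite /sqn ip_ee. Qed.

Definition proj x s : V := \sum_(j <- s) ip x (e j) *: e j.
Definition coef2 x j : R := normc2 (ip x (e j)).
Definition psum x s : R := \sum_(j <- s) coef2 x j.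

Lemma ip_proj_e x s k : uniq s ->
  ip (proj x s) (e k) = if k \in s then ip x (e k) else 0.
Proof.
move=> s_uniq; rewrite ip_suml //; under eq_bigr do rewrite ipZl //.
have [ks|kNs] := boolP (k \in s).
  rewrite (bigD1_seq k) //= ip_ee mulr1 big1 ?addr0 // => j /eqP jk.
  by rewrite ip_e_neq ?mulr0.
rewrite big_seq big1 // => j js; rewrite ip_e_neq ?mulr0 //.
by move=> jk; rewrite -jk js in kNs.
Qed.

Lemma ip_proj_orth x z s : (forall j, j \in s -> ip z (e j) = 0) -> ip z (proj x s) = 0.
Proof.
move=> zs; rewrite ip_sumr // big_seq big1 // => j js.
by rewrite ipZr // zs // mulr0.
Qed.

Lemma sqn_sub_proj x s : uniq s -> sqn (x - proj x s) = sqn x - psum x s.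
Proof.
move=> s_uniq.
have Re_ip_proj : Re (ip x (proj x s)) = psum x s.
  rewrite ip_sumr // Re_sum; apply: eq_bigr => j _.
  by rewrite ipZr // mulrC Re_mul_conjc.
have sqn_proj : sqn (proj x s) = psum x s.
  rewrite /sqn {1}/proj ip_suml // Re_sum big_seq [RHS]big_seq.
  apply: eq_bigr => j js.
  by rewrite ipZl // (ip_conj ipax (proj x s)) ip_proj_e // js Re_mul_conjc.
by rewrite sqnB // Re_ip_proj sqn_proj; ring.
Qed.

Lemma bessel x s : uniq s -> psum x s <= sqn x.
Proof.
by move=> s_uniq; have := sqn_ge0 ipax (x - proj x s); rewrite sqn_sub_proj //; lra.
Qed.

Lemma sqn_proj_sub x s t : uniq s -> uniq t -> {subset s <= t} ->
  sqn (proj x t - proj x s) = psum x t - psum x s.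
Proof.
move=> s_uniq t_uniq st.
have orth : ip (x - proj x t) (proj x t - proj x s) = 0.
  rewrite ipBr // !(ip_proj_orth x) ?subrr // => j js;
    by rewrite ipBl // ip_proj_e // ?(st _ js) ?js subrr.
have := sqn_sub_proj x s_uniq.
have -> : x - proj x s = (x - proj x t) + (proj x t - proj x s) by rewrite addrA subrK.
by rewrite sqnD // orth sqn_sub_proj //= mulr0 addr0; lra.
Qed.

Lemma psum_mono x s t : uniq s -> uniq t -> {subset s <= t} -> psum x s <= psum x t.
Proof.
move=> s_uniq t_uniq st.
by have := sqn_ge0 ipax (proj x t - proj x s); rewrite sqn_proj_sub //; lra.
Qed.

Local Open Scope classical_set_scope.

Lemma esumR_coef2_le x : (esumR (coef2 x) <= (sqn x)%:E)%E.
Proof.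
apply: ge_ereal_sup => _ [A [finA _] <-].
by rewrite fsumEFin // lee_fin fsbig_finite //; apply: bessel.
Qed.

Lemma fin_esumR_coef2 x : fin_esumR (coef2 x).
Proof. exact: le_lt_trans (esumR_coef2_le x) (ltry _). Qed.

Lemma esumR_coef2E x : esumR (coef2 x) = (sumR (coef2 x))%:E.
Proof. by apply: esumRE; [move=> j; apply: normc2_ge0|exact: fin_esumR_coef2]. Qed.

Lemma psum_le_sumR x s : uniq s -> psum x s <= sumR (coef2 x).
Proof.
move=> s_uniq; rewrite -lee_fin -esumR_coef2E; apply: esum_ge.
exists [set` s]; first by split => //; exact: finite_seq.
by rewrite fsumEFin ?finite_seq // -fsbig_seq.
Qed.

Lemma psum_approx x r : 0 < r ->
  exists s, uniq s /\ sumR (coef2 x) - r < psum x s.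
Proof.
move=> r_gt0.
have : ((sumR (coef2 x) - r)%:E < esumR (coef2 x))%E.
  by rewrite esumR_coef2E lte_fin ltrBlDr ltrDl.
move=> /ereal_sup_gt [_ [A [finA _] <-]].
rewrite fsumEFin // lte_fin fsbig_finite // => approx.
by exists (finmap.enum_fset (fset_set A)); split => //; exact: fset_uniq.
Qed.

Lemma psum_chain x : exists t : nat -> seq I,
  [/\ forall n, uniq (t n), forall n m, (n <= m)%N -> {subset t n <= t m} &
      forall n, sumR (coef2 x) - n.+1%:R^-1 < psum x (t n)].
Proof.
have inv_gt0 n : 0 < n.+1%:R^-1 :> R by rewrite invr_gt0.
have [s hs] := choice (fun n => psum_approx x (inv_gt0 n)).
exists (accum s); split => [n|n m|n]; [exact: accum_uniq|exact: accum_mono|].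
have [s_uniq approx] := hs n; apply: (lt_le_trans approx).
by apply: psum_mono => //; [exact: accum_uniq|exact: accum_sub].
Qed.

(* If k is not in s, then psum x (k :: s) <= sumR (coef2 x) bounds coef2 x k by r. *)
Lemma coef_residual_lt x s k r : uniq s -> sumR (coef2 x) - r < psum x s ->
  normc2 (ip (x - proj x s) (e k)) < r.
Proof.
move=> s_uniq approx; have := psum_le_sumR x s_uniq => psum_le.
rewrite ipBl // ip_proj_e //; case: ifP => [_|kNs].
  by rewrite subrr /normc2 /= expr0n /= addr0; lra.
have := psum_le_sumR x (_ : uniq (k :: s)); rewrite /= kNs => /(_ s_uniq).
by rewrite /psum big_cons -/(psum x s) subr0 /coef2; lra.
Qed.

Lemma ip_e_eq0_of_approx x l k :
  (forall eps, 0 < eps ->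
     exists y, normc2 (ip (x - y) (e k)) < eps /\ sqn (y - l) < eps) ->
  ip (x - l) (e k) = 0.
Proof.
move=> approx; apply: normc2_eq0; apply/eqP; rewrite eq_le normc2_ge0 andbT.
apply/ler_addgt0Pr => eps eps_gt0; rewrite add0r.
have [y [xy yl]] : exists y, normc2 (ip (x - y) (e k)) < eps / 4 /\ sqn (y - l) < eps / 4.
  by apply: approx; rewrite divr_gt0.
have := normc2D_le (ip (x - y) (e k)) (ip (y - l) (e k)).
rewrite -ipDl // addrA subrK.
have := normc2_ip_le ipax (y - l) (e k); rewrite sqn_e mulr1.
lra.
Qed.

Lemma parseval x : sumR (coef2 x) = sqn x.
Proof.
have [t [t_uniq t_mono t_approx]] := psum_chain x.
pose y n := proj x (t n).
have y_cauchy : cauchy_seq ip y.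
  apply: cauchy_seq_sqn => eps eps_gt0; have [N hN] := inv_nat_lt eps_gt0.
  exists N => m n; wlog le_nm : m n / (n <= m)%N => [hwlog|].
    have [le|/ltnW le] := leqP n m; first exact: hwlog.
    by move=> hm hn; rewrite -sqnN // opprB; apply: hwlog.
  move=> _ hn; rewrite /y sqn_proj_sub //; last exact: t_mono.
  have := psum_le_sumR x (t_uniq m); have := t_approx n; have := hN n hn.
  by move: (n.+1%:R^-1) => r; lra.
have [l /converges_to_sqn y_l] := hcomp y_cauchy.
have x_eq_l : x = l.
  apply/eqP; rewrite -subr_eq0; apply/eqP/orthonormal_total => k.
  apply: ip_e_eq0_of_approx => eps eps_gt0.
  have [N1 hN1] := inv_nat_lt eps_gt0; have [N2 hN2] := y_l _ eps_gt0.
  exists (y (maxn N1 N2)); split; last by apply: hN2; rewrite leq_maxr.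
  apply: lt_trans (hN1 _ (leq_maxl _ _)).
  by apply: coef_residual_lt; [exact: t_uniq|exact: t_approx].
apply/eqP; rewrite eq_le -lee_fin -esumR_coef2E esumR_coef2_le /=.
apply/ler_addgt0Pr => eps eps_gt0; have [N hN] := y_l _ eps_gt0.
have := hN _ (leqnn N); rewrite -x_eq_l -sqnN // opprB sqn_sub_proj //.
by have := psum_le_sumR x (t_uniq N); lra.
Qed.

Lemma esumR_parseval x : esumR (coef2 x) = (sqn x)%:E.
Proof. by rewrite esumR_coef2E parseval. Qed.

End Parseval.

Section Adjoint.
Variable R : realType.
Variables (V : lmodType R[i]) (ip : V -> V -> R[i]).
Hypothesis ipax : inner_product_axioms ip.
Implicit Types X Y Xs Ys : V -> V.

Lemma adjoint_sym X Xs : is_adjoint ip X Xs -> is_adjoint ip Xs X.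
Proof. by move=> aX x y; rewrite (ip_conj ipax) -aX -(ip_conj ipax). Qed.

Lemma adjointD X Xs Y Ys : is_adjoint ip X Xs -> is_adjoint ip Y Ys ->
  is_adjoint ip (fun x => X x + Y x) (fun x => Xs x + Ys x).
Proof. by move=> aX aY x y; rewrite ipDl // ipDr // aX aY. Qed.

Lemma adjointZ a X Xs : is_adjoint ip X Xs ->
  is_adjoint ip (fun x => a *: X x) (fun x => conjc a *: Xs x).
Proof. by move=> aX x y; rewrite ipZl // ipZr // conjcK aX. Qed.

End Adjoint.

Lemma expi0 (R : realType) : expi (0 : R) = 1.
Proof. by rewrite /expi cos0 sin0. Qed.

Lemma normc2_expi (R : realType) (t : R) : normc2 (expi t) = 1.
Proof. by rewrite /normc2 /expi /= cos2Dsin2. Qed.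

Section HilbertSchmidt.
Variable R : realType.
Variables (V : lmodType R[i]) (ip : V -> V -> R[i]).
Hypotheses (ipax : inner_product_axioms ip) (hcomp : complete_space ip).
Variables (I : choiceType) (e : I -> V).
Hypothesis onb : orthonormal_basis ip e.
Local Notation sqn := (sqn ip).
Local Notation Re := complex.Re.
Local Notation Im := complex.Im.
Local Notation hs_norm := (hs_norm ip e).
Implicit Types X Y Xs Ys : V -> V.

Definition hs_sq X i : R := sqn (X (e i)).
Definition hs_finite X : Prop := fin_esumR (hs_sq X).

Lemma hs_sq_ge0 X i : 0 <= hs_sq X i.
Proof. exact: sqn_ge0. Qed.

Lemma hs_sumE X : hs_sum ip e X = esumR (hs_sq X).
Proof.
by apply: eq_esum => i _; rewrite /vnorm sqr_sqrtr //; apply: sqn_ge0.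
Qed.

Lemma hs_norm_sqrE X : hs_norm X ^+ 2 = sumR (hs_sq X).
Proof. by rewrite /hs_norm hs_sumE sqr_sqrtr // sumR_ge0 // => i; apply: hs_sq_ge0. Qed.

Local Open Scope classical_set_scope.

(* Parseval on each column, then Fubini: both sides equal sum_(i,j) |<X e_i, e_j>|^2. *)
Lemma esumR_hs_sq_adjoint X Xs : is_adjoint ip X Xs ->
  esumR (hs_sq X) = esumR (hs_sq Xs).
Proof.
move=> aX; have sq_esum Y i : (hs_sq Y i)%:E = esumR (coef2 ip e (Y (e i))).
  by rewrite esumR_parseval.
rewrite /esumR; under eq_esum do rewrite sq_esum; under [RHS]eq_esum do rewrite sq_esum.
rewrite /esumR !esum_esum => [| * | *]; rewrite ?lee_fin ?normc2_ge0 //.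
have setTT : [set: I] `*`` (fun _ => [set: I]) = [set: I * I] by apply/seteqP; split.
rewrite setTT (@reindex_esum _ _ _ [set: I * I] [set: I * I] (fun k => (k.2, k.1))) /=.
  apply: eq_esum => -[i j] _ /=.
  by rewrite /coef2 aX (ip_conj ipax) normc2_conjc.
by rewrite setTT_bijective; exists (fun k : I * I => (k.2, k.1)) => -[].
Qed.

Lemma hs_finite_adjoint X Xs : is_adjoint ip X Xs -> hs_finite X -> hs_finite Xs.
Proof. by move=> aX; rewrite /hs_finite /fin_esumR (esumR_hs_sq_adjoint aX). Qed.

Lemma hs_norm_adjoint X Xs : is_adjoint ip X Xs -> hs_norm Xs = hs_norm X.
Proof. by move=> aX; rewrite /hs_norm !hs_sumE (esumR_hs_sq_adjoint aX). Qed.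

Lemma hs_finiteD X Y : hs_finite X -> hs_finite Y -> hs_finite (fun x => X x + Y x).
Proof.
move=> fX fY; have := fin_esumRD (hs_sq_ge0 X) (hs_sq_ge0 Y) fX fY.
move=> /(fin_esumRZ (ler0n _ 2) (fun i => addr_ge0 (hs_sq_ge0 X i) (hs_sq_ge0 Y i))).
by apply: fin_esumR_le => i; rewrite mulrDr; apply: sqnD_le.
Qed.

Lemma hs_finiteZ a X : hs_finite X -> hs_finite (fun x => a *: X x).
Proof.
move=> /(fin_esumRZ (normc2_ge0 a) (hs_sq_ge0 X)).
by apply: fin_esumR_le => i; rewrite /hs_sq sqnZ.
Qed.

Lemma hs_normZ a X : hs_finite X ->
  hs_norm (fun x => a *: X x) ^+ 2 = normc2 a * hs_norm X ^+ 2.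
Proof.
move=> fX; rewrite !hs_norm_sqrE -sumRZ ?normc2_ge0 //; last exact: hs_sq_ge0.
by congr sumR; apply/funext => i; rewrite /hs_sq sqnZ.
Qed.

Definition hs_ip X Y : R[i] := csum (fun i => ip (X (e i)) (Y (e i))).

Lemma csummable_ip X Y : hs_finite X -> hs_finite Y ->
  csummable (fun i => ip (X (e i)) (Y (e i))).
Proof.
move=> fX fY; have fXY := fin_esumRD (hs_sq_ge0 X) (hs_sq_ge0 Y) fX fY.
split; apply: summableR_le fXY => i /=; rewrite /hs_sq.
  have := Re_ip_le ipax (X (e i)) (Y (e i)).
  by have := normr_ge0 (Re (ip (X (e i)) (Y (e i)))); lra.
have := Im_ip_le ipax (X (e i)) (Y (e i)).
by have := normr_ge0 (Im (ip (X (e i)) (Y (e i)))); lra.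
Qed.

Lemma hs_ip_conj X Y : hs_ip Y X = conjc (hs_ip X Y).
Proof. by rewrite /hs_ip -csum_conj; congr csum; apply/funext => i; apply: ip_conj. Qed.

Section Sesquilinear.
Variables X Y Z : V -> V.
Hypotheses (fX : hs_finite X) (fY : hs_finite Y) (fZ : hs_finite Z).

Lemma hs_ipDl : hs_ip (fun x => X x + Y x) Z = hs_ip X Z + hs_ip Y Z.
Proof.
rewrite /hs_ip -csumD; try exact: csummable_ip.
by congr csum; apply/funext => i; rewrite ipDl.
Qed.

Lemma hs_ipDr : hs_ip Z (fun x => X x + Y x) = hs_ip Z X + hs_ip Z Y.
Proof. by rewrite [LHS]hs_ip_conj hs_ipDl rmorphD (hs_ip_conj X) (hs_ip_conj Y). Qed.

Lemma hs_ipZl a : hs_ip (fun x => a *: X x) Y = a * hs_ip X Y.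
Proof.
rewrite /hs_ip -csumZ; last exact: csummable_ip.
by congr csum; apply/funext => i; rewrite ipZl.
Qed.

Lemma hs_ipZr a : hs_ip Y (fun x => a *: X x) = conjc a * hs_ip Y X.
Proof. by rewrite [LHS]hs_ip_conj hs_ipZl rmorphM (hs_ip_conj X). Qed.

End Sesquilinear.

Lemma hs_ipxx X : hs_finite X -> hs_ip X X = (hs_norm X ^+ 2)%:C%C.
Proof.
move=> fX; rewrite hs_norm_sqrE -csum_real //; last exact: hs_sq_ge0.
by congr csum; apply/funext => i; rewrite ipxx.
Qed.

Lemma hs_normD X Y : hs_finite X -> hs_finite Y ->
  hs_norm (fun x => X x + Y x) ^+ 2 = hs_norm X ^+ 2 + hs_norm Y ^+ 2 + 2 * Re (hs_ip X Y).
Proof.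
move=> fX fY; have fXY := hs_finiteD fX fY.
have := hs_ipxx fXY; rewrite hs_ipDl // !hs_ipDr // !hs_ipxx // (hs_ip_conj X Y).
by move=> /(congr1 (@complex.Re R)); rewrite !Re_add Re_conjc /= => <-; ring.
Qed.

Lemma Re_hs_ip_adjoint X Xs Y Ys : is_adjoint ip X Xs -> is_adjoint ip Y Ys ->
  hs_finite X -> hs_finite Y -> Re (hs_ip X Y) = Re (hs_ip Ys Xs).
Proof.
move=> aX aY fX fY.
have [fXs fYs] := (hs_finite_adjoint aX fX, hs_finite_adjoint aY fY).
have := hs_normD fXs fYs; have := hs_normD fX fY.
rewrite (hs_norm_adjoint (adjointD ipax aX aY)) (hs_norm_adjoint aX) (hs_norm_adjoint aY).
by rewrite (hs_ip_conj Xs Ys) Re_conjc; lra.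
Qed.

Lemma hs_ip_adjoint X Xs Y Ys : is_adjoint ip X Xs -> is_adjoint ip Y Ys ->
  hs_finite X -> hs_finite Y -> hs_ip X Y = hs_ip Ys Xs.
Proof.
move=> aX aY fX fY; apply: complex_eq; first exact: Re_hs_ip_adjoint.
have [fXs fYs] := (hs_finite_adjoint aX fX, hs_finite_adjoint aY fY).
rewrite !Im_Re_conji -hs_ipZr // -hs_ipZl //.
by apply: Re_hs_ip_adjoint (adjointZ ipax _ aY) _ (hs_finiteZ _ fY).
Qed.

Lemma trace_comp X Y Ys : is_adjoint ip Y Ys ->
  trace ip e (fun x => Y (X x)) = hs_ip X Ys.
Proof. by move=> aY; congr csum; apply/funext => i; apply: aY. Qed.

Lemma hs_norm_re_op X Xs : is_adjoint ip X Xs -> hs_finite X ->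
  hs_norm (re_op X Xs) ^+ 2 = 2^-1 * (hs_norm X ^+ 2 + Re (hs_ip X Xs)).
Proof.
move=> aX fX; have fXs := hs_finite_adjoint aX fX.
rewrite /re_op (hs_normZ _ (X := fun x => X x + Xs x)); last exact: hs_finiteD.
by rewrite hs_normD // (hs_norm_adjoint aX) normc2_half; field.
Qed.

Section EuclideanRadius.
Variables (B Bs C Cs : V -> V).
Hypotheses (aB : is_adjoint ip B Bs) (aC : is_adjoint ip C Cs).
Hypotheses (fB : hs_finite B) (fC : hs_finite C).
Local Notation trace := (trace ip e).

Let fBs : hs_finite Bs := hs_finite_adjoint aB fB.
Let fCs : hs_finite Cs := hs_finite_adjoint aC fC.

Lemma hs_norm_re_op_le (l1 l2 : R[i]) t :
  ComplexField.Normc.normc l1 ^+ 2 + ComplexField.Normc.normc l2 ^+ 2 <= 1 ->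
  hs_norm (re_op (fun x => expi t *: (l1 *: B x + l2 *: C x))
                 (fun x => conjc (expi t) *: (conjc l1 *: Bs x + conjc l2 *: Cs x)))
  <= Num.sqrt (sumR (fun i => hs_sq B i + hs_sq C i + hs_sq Bs i + hs_sq Cs i)).
Proof.
rewrite !sqr_normcE => l12_le1.
have [l1_le1 l2_le1] : normc2 l1 <= 1 /\ normc2 l2 <= 1.
  by have := normc2_ge0 l1; have := normc2_ge0 l2; lra.
rewrite /hs_norm hs_sumE ler_sqrt; last first.
  by apply: sumR_ge0 => i; rewrite !addr_ge0 ?hs_sq_ge0.
apply: ler_sumR => [i|i|]; first exact: hs_sq_ge0.
  exact: sqn_re_op_le (normc2_expi t) l1_le1 l2_le1.
by do 3?apply: fin_esumRD => //; move=> i; rewrite ?addr_ge0 ?hs_sq_ge0.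
Qed.

Lemma hs_norm_re_op_le_w2e (l1 l2 : R[i]) t :
  ComplexField.Normc.normc l1 ^+ 2 + ComplexField.Normc.normc l2 ^+ 2 <= 1 ->
  hs_norm (re_op (fun x => expi t *: (l1 *: B x + l2 *: C x))
                 (fun x => conjc (expi t) *: (conjc l1 *: Bs x + conjc l2 *: Cs x)))
  <= w2e ip e B Bs C Cs.
Proof.
move=> l12_le1; apply: ub_le_sup; last by exists l1, l2, t.
by exists (Num.sqrt (sumR (fun i => hs_sq B i + hs_sq C i + hs_sq Bs i + hs_sq Cs i)))
  => _ [m1 [m2 [s [m12_le1 ->]]]]; apply: hs_norm_re_op_le.
Qed.

Lemma hs_norm_re_op_sum (w : R[i]) :
  hs_norm (re_op (fun x => w *: (B x + C x)) (fun x => conjc w *: (Bs x + Cs x))) ^+ 2 =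
  normc2 w / 2 * (hs_norm B ^+ 2 + hs_norm C ^+ 2 + 2 * Re (trace (fun x => B (Cs x))))
  + 2^-1 * Re (w * w * (trace (fun x => B (B x)) + trace (fun x => C (C x))
                        + 2 * trace (fun x => B (C x)))).
Proof.
have [fBC fBsCs] := (hs_finiteD fB fC, hs_finiteD fBs fCs).
have aX := adjointZ ipax w (adjointD ipax aB aC).
have fX := hs_finiteZ w fBC.
have fXs := hs_finiteZ (conjc w) fBsCs.
rewrite hs_norm_re_op // (hs_normZ _ fBC) hs_normD //.
rewrite (hs_ipZl fBC fXs) (hs_ipZr fBsCs fBC) conjcK.
rewrite hs_ipDl // !hs_ipDr // !(trace_comp _ aB) (trace_comp _ aC).
rewrite (hs_ip_adjoint aB (adjoint_sym ipax aC)) // (Re_hs_ip_adjoint aB aC) // mulrA.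
have -> : hs_ip B Bs + hs_ip C Bs + (hs_ip C Bs + hs_ip C Cs)
          = hs_ip B Bs + hs_ip C Cs + 2 * hs_ip C Bs by ring.
by field.
Qed.

End EuclideanRadius.

End HilbertSchmidt.

Theorem theorem3p1 (R : realType) (V : lmodType R[i]) (ip : V -> V -> R[i])
  (I : choiceType) (e : I -> V)
  (B Bs C Cs : V -> V) :
  hilbert_space ip ->
  orthonormal_basis ip e ->
  hilbert_schmidt ip e B -> hilbert_schmidt ip e C ->
  is_adjoint ip B Bs -> is_adjoint ip C Cs ->
  (w2e ip e B Bs C Cs) ^+ 2 >=
    4^-1 * ComplexField.Normc.normc (trace ip e (fun x => B (B x))
                          + trace ip e (fun x => C (C x))
                          + 2 * trace ip e (fun x => B (C x)))
  + 4^-1 * (hs_norm ip e B ^+ 2 + hs_norm ip e C ^+ 2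
            + 2 * complex.Re (trace ip e (fun x => B (Cs x)))).
Proof.
move=> [ipax hcomp] onb [_ hsB] [_ hsC] aB aC.
have [fB fC] : hs_finite ip e B /\ hs_finite ip e C.
  by rewrite /hs_finite /fin_esumR -!hs_sumE.
have [w [w_half wZ]] := exists_half_phase (trace ip e (fun x => B (B x))
    + trace ip e (fun x => C (C x)) + 2 * trace ip e (fun x => B (C x))).
have w2_le1 : ComplexField.Normc.normc w ^+ 2 + ComplexField.Normc.normc w ^+ 2 <= 1.
  by rewrite sqr_normcE w_half; lra.
have := hs_norm_re_op_le_w2e ipax hcomp onb aB aC fB fC 0 w2_le1.
have -> : (fun x => expi 0 *: (w *: B x + w *: C x)) = (fun x => w *: (B x + C x)).
  by apply/funext => x; rewrite expi0 scale1r scalerDr.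
have -> : (fun x => conjc (expi 0) *: (conjc w *: Bs x + conjc w *: Cs x))
          = (fun x => conjc w *: (Bs x + Cs x)).
  by apply/funext => x; rewrite expi0 conjc1 scale1r scalerDr.
move=> T_le_w2e; have := hs_norm_re_op_sum ipax hcomp onb aB aC fB fC w.
rewrite w_half wZ; set T := hs_norm ip e _ in T_le_w2e * => T2.
have T_ge0 : 0 <= T by exact: sqrtr_ge0.
have : T ^+ 2 <= w2e ip e B Bs C Cs ^+ 2 by rewrite !expr2 ler_pM.
by rewrite T2; lra.
Qed.
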